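(* Let $d\ge1$ and let $G$ be a $d$-regular triangle-free graph on $n$ vertices. Then for every $\lambda>0$, \[ \frac1n\overline\alpha_G(\lambda)\;\le\;\frac{1}{2d}\overline\alpha_{K_{d,d}}(\lambda)=\frac{\lambda(1+\lambda)^{d-1}}{2(1+\lambda)^d-1}, \] with equality only if $G$ is a disjoint union of copies of $K_{d,d}$.
   Context: For a graph $H$ and $\lambda>0$, $P_H(\lambda)=\sum_J\lambda^{|J|}$ summed over all independent sets $J$ of $H$ (including the empty set), and $\overline\alpha_H(\lambda)=\lambda P_H'(\lambda)/P_H(\lambda)$ is the expected size of an independent set drawn from the hard-core model $\Pr[J]=\lambda^{|J|}/P_H(\lambda)$. $K_{d,d}$ is the complete bipartite graph with parts of size $d$. *)

From HB Require Import structures.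
From mathcomp Require Import all_boot all_order all_algebra.
Set Implicit Arguments. Unset Strict Implicit. Unset Printing Implicit Defensive.
Import Order.TTheory GRing.Theory Num.Theory.
Local Open Scope ring_scope.

Definition simple_graph (V : finType) (e : rel V) : Prop :=
  (forall x y, e x y = e y x) /\ (forall x, ~~ e x x).

Definition regular (V : finType) (e : rel V) (d : nat) : Prop :=
  forall x : V, #|[set y | e x y]| = d.

Definition triangle_free (V : finType) (e : rel V) : Prop :=
  forall x y z : V, e x y -> e y z -> ~~ e x z.

Definition independent (V : finType) (e : rel V) (A : {set V}) : bool :=
  [forall x in A, forall y in A, ~~ e x y].

Definition indep_poly (R : nzRingType) (V : finType) (e : rel V) : {poly R} :=
  \sum_(A : {set V} | independent e A) 'X^#|A|.

(* Hard-core expected size: lambda * P'(lambda) / P(lambda). *)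
Definition alpha_bar (R : fieldType) (V : finType) (e : rel V) (lam : R) : R :=
  lam * ((indep_poly R e)^`()).[lam] / (indep_poly R e).[lam].

(* Complete bipartite graph K_{d,d} on vertices bool * 'I_d (side, index). *)
Definition Kdd_rel (d : nat) : rel (bool * 'I_d) := fun u v => u.1 != v.1.

(* G is (isomorphic to) a disjoint union of copies of K_{d,d}: a bijection
   V -> I * (bool * 'I_d) for some finite index type I of copies, carrying the
   edges of G exactly to edges inside a common copy of K_{d,d}. *)
Definition disjoint_union_Kdd (V : finType) (e : rel V) (d : nat) : Prop :=
  exists (I : finType) (f : V -> I * (bool * 'I_d)),
    bijective f /\
    forall x y, e x y = ((f x).1 == (f y).1) && Kdd_rel (f x).2 (f y).2.

From HB Require Import structures.
From mathcomp Require Import all_boot all_order all_algebra.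
From mathcomp Require Import ring.
Set Implicit Arguments. Unset Strict Implicit. Unset Printing Implicit Defensive.
Import Order.TTheory GRing.Theory Num.Theory.
Local Open Scope ring_scope.

(* Let P = P_G, n = |V| and a = 1 + lam.  Fix a vertex v and an independent set
   J avoiding the closed neighbourhood N[v], and let U_v(J) be the set of
   neighbours of v having no neighbour in J.  Since G is triangle-free, every
   subset of U_v(J) is independent, so the independent sets I with
   I \ N[v] = J are J + v and the sets J + S with S a subset of U_v(J).
   Summing over all v and J with weight lam^|J| therefore writes n P(lam),
   lam P'(lam) and d lam P'(lam) as sums of lam + a^y, lam and y lam a^(y-1)
   respectively, evaluated at y = |U_v(J)|.  The combination
   d lam (a^(d-1) n P - P' (2 a^d - 1)) becomes a sum of [slack lam d y], which
   is nonnegative for y <= d and vanishes only for y = 0 and y = d, because the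
   mean of the top y of the powers a^i, i < d, exceeds their overall mean.  In
   the case of equality, taking J = {x} with x at distance two from v shows that
   x and v have the same neighbourhood, and this forces G to be a disjoint union
   of copies of K_{d,d}. *)

Section SubsetSums.
Variables (R : comNzRingType) (T : finType).

Lemma prod_mem_subset (x : R) (S U : {set T}) :
  \prod_(i in S) ((i \in U)%:R * x) = (S \subset U)%:R * x ^+ #|S|.
Proof.
have [sSU | /subsetPn[i iS iU]] := boolP (S \subset U).
  rewrite mul1r -prodr_const; apply: eq_bigr => i iS.
  by rewrite (subsetP sSU i iS) mul1r.
by rewrite (bigD1 i) //= (negbTE iU) !mul0r.
Qed.

Lemma sum_subset_expr (x : R) (U : {set T}) :
  \sum_(S : {set T} | S \subset U) x ^+ #|S| = (1 + x) ^+ #|U|.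
Proof.
transitivity (\prod_(i : T) ((i \in U)%:R * x + 1)); last first.
  rewrite (bigID (mem U)) /= -[RHS]mulr1; congr (_ * _).
    by rewrite -prodr_const; apply: eq_bigr => i ->; rewrite mul1r addrC.
  by rewrite big1 // => i /negbTE ->; rewrite mul0r add0r.
rewrite bigA_distr big_mkcond /=; apply: eq_bigr => S _.
by rewrite -big_mkcond prod_mem_subset; case: (S \subset U); rewrite ?mul1r ?mul0r.
Qed.

End SubsetSums.

Lemma sum_subset_card_expr (R : comNzRingType) (T : finType) (x : R) (U : {set T}) :
  \sum_(S : {set T} | S \subset U) #|S|%:R * x ^+ #|S|
  = #|U|%:R * x * (1 + x) ^+ #|U|.-1.
Proof.
have := congr1 (fun p : {poly R} => x * p^`().[x]) (sum_subset_expr 'X U).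
rewrite /= raddf_sum /= horner_sum mulr_sumr deriv_exp derivD derivC derivX add0r.
rewrite mul1r hornerMn horner_exp hornerD hornerC hornerX mulrnAr -mulr_natl mulrA.
move <-; apply: eq_bigr => S _.
rewrite derivXn hornerMn hornerXn mulrnAr.
by case: #|S| => [|k]; rewrite ?mul0r // -exprS mulr_natl.
Qed.

Lemma expr_mean_lt (R : realDomainType) (a : R) (k y : nat) :
  1 < a -> (0 < k)%N -> (0 < y)%N ->
  y%:R * (a ^+ (k + y) - 1) < (k + y)%:R * (a ^+ (k + y) - a ^+ k).
Proof.
move=> a_gt1 k_gt0 y_gt0.
set low := \sum_(i < k) a ^+ i; set high := \sum_(i < y) a ^+ (k + i).
have low_lt : low < k%:R * a ^+ k.
  have -> : k%:R * a ^+ k = \sum_(i < k) a ^+ k by rewrite sumr_const card_ord mulr_natl.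
  apply: ltr_sum => [|i _]; first by apply/hasP; exists (Ordinal k_gt0).
  by rewrite ltr_eXn2l.
have high_ge : y%:R * a ^+ k <= high.
  have -> : y%:R * a ^+ k = \sum_(i < y) a ^+ k by rewrite sumr_const card_ord mulr_natl.
  by apply: ler_sum => i _; rewrite ler_eXn2l // leq_addr.
have e1 : a ^+ (k + y) - 1 = (a - 1) * (low + high).
  by rewrite subrX1 big_split_ord.
have e2 : a ^+ (k + y) - a ^+ k = (a - 1) * high.
  rewrite /high; under eq_bigr do rewrite exprD.
  rewrite -mulr_sumr mulrCA -subrX1.
  by rewrite mulrBr mulr1 -exprD.
rewrite e1 e2 -subr_gt0.
have -> : (k + y)%:R * ((a - 1) * high) - y%:R * ((a - 1) * (low + high))
          = (a - 1) * (k%:R * high - y%:R * low) by rewrite natrD; ring.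
rewrite mulr_gt0 ?subr_gt0 //.
apply: (lt_le_trans (y := k%:R * (y%:R * a ^+ k))); last by rewrite ler_wpM2l.
by rewrite mulrCA ltr_pM2l ?ltr0n.
Qed.

Section Slack.
Variable R : realDomainType.
Implicit Types (x : R) (d y : nat).

Definition slack x d y : R :=
  d%:R * x * (1 + x) ^+ d.-1 * (x + (1 + x) ^+ y) - d%:R * (1 + x) ^+ d * x
  - ((1 + x) ^+ d - 1) * (y%:R * x * (1 + x) ^+ y.-1).

Lemma slack0 x d : slack x d 0 = 0.
Proof. by case: d => [|d]; rewrite /slack ?mul0r ?mulr0 ?subrr //= exprS; ring. Qed.

Lemma slack_deg x d : slack x d d = 0.
Proof. by case: d => [|d]; rewrite /slack ?mul0r ?mulr0 ?subrr //= exprS; ring. Qed.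

Lemma slack_gt0 x d y : 0 < x -> (0 < y < d)%N -> 0 < slack x d y.
Proof.
move=> x_gt0 /andP[y_gt0 y_lt_d].
have [k k_gt0 ->] : exists2 k, (0 < k)%N & d = (k + y)%N.
  by exists (d - y)%N; rewrite ?subnK ?subn_gt0 // ltnW.
case: y y_gt0 {y_lt_d} => // y _.
have -> : slack x (k + y.+1) y.+1 = x * (1 + x) ^+ y *
    ((k + y.+1)%:R * ((1 + x) ^+ (k + y.+1) - (1 + x) ^+ k)
     - y.+1%:R * ((1 + x) ^+ (k + y.+1) - 1)).
  by rewrite /slack addnS /= !exprS exprD; ring.
rewrite mulr_gt0 ?subr_gt0 ?expr_mean_lt ?ltrDl //.
by rewrite mulr_gt0 ?exprn_gt0 ?addr_gt0.
Qed.

Lemma slack_ge0 x d y : 0 < x -> (y <= d)%N -> 0 <= slack x d y.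
Proof.
move=> x_gt0; rewrite leq_eqVlt => /orP[/eqP-> | y_lt_d]; first by rewrite slack_deg.
have [-> | y_gt0] := posnP y; first by rewrite slack0.
by rewrite ltW // slack_gt0 ?y_gt0.
Qed.

End Slack.

Section Neighbourhoods.
Variables (V : finType) (e : rel V).
Implicit Types (v : V) (A J S : {set V}).

Definition nbhd (v : V) : {set V} := [set y | e v y].
Definition cnbhd (v : V) : {set V} := v |: nbhd v.
Definition uncovered (v : V) (J : {set V}) : {set V} :=
  [set u in nbhd v | [forall j in J, ~~ e u j]].
Definition indep_outside (v : V) (J : {set V}) : bool :=
  (J \subset ~: cnbhd v) && independent e J.

Lemma independentP (A : {set V}) :
  reflect {in A &, forall x y, ~~ e x y} (independent e A).
Proof.
apply: (iffP forall_inP) => [indA x y xA yA | indA x xA].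
  by move/forall_inP: (indA x xA); apply.
by apply/forall_inP => y yA; apply: indA.
Qed.

Lemma uncovered_sub v J : uncovered v J \subset nbhd v.
Proof. by apply/subsetP => u; rewrite inE => /andP[]. Qed.

Lemma sub1set_cnbhd v : [set v] \subset cnbhd v.
Proof. by rewrite sub1set setU11. Qed.

Lemma outside_setU v J S : J \subset ~: cnbhd v -> S \subset cnbhd v ->
  [/\ #|J :|: S| = (#|J| + #|S|)%N, (J :|: S) :&: nbhd v = S :&: nbhd v
    & (v \in J :|: S) = (v \in S)].
Proof.
move=> /subsetP sJ /subsetP sS.
have notinJ z : z \in cnbhd v -> z \notin J by apply: contraL => /sJ; rewrite inE.
have vC : v \in cnbhd v by rewrite setU11.
split.
- rewrite cardsU; suff -> : J :&: S = set0 by rewrite cards0 subn0.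
  by apply/setP => z; rewrite !inE; case zS: (z \in S); rewrite ?andbF ?(negbTE (notinJ z _)) ?sS.
- apply/setP => z; rewrite !inE; case ezv: (e v z); rewrite ?andbF //=.
  by rewrite (negbTE (notinJ z _)) // !inE ezv orbT.
- by rewrite in_setU (negbTE (notinJ v vC)).
Qed.

Lemma independent_setU_center v J S : S \subset cnbhd v -> v \in S ->
  independent e (J :|: S) -> S = [set v].
Proof.
move=> /subsetP sS vS /independentP indJS; apply/setP => z; rewrite inE.
apply/idP/eqP => [zS | ->] //; apply/eqP/negPn/negP => zv.
move: (sS z zS); rewrite !inE (negbTE zv) /= => evz.
by move: (indJS v z); rewrite !inE vS zS ?orbT evz => /(_ isT isT).
Qed.

Hypothesis hG : simple_graph e.

Lemma independent_setU1_center v J : indep_outside v J -> independent e (J :|: [set v]).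
Proof.
have [esym eirr] := hG.
case/andP=> /subsetP sJ /independentP indJ.
have farJ z : z \in J -> (z != v) && ~~ e v z.
  by move/sJ; rewrite !inE negb_or.
apply/independentP => x y; rewrite !inE => /orP[xJ | /eqP->] /orP[yJ | /eqP->].
- exact: indJ.
- by rewrite esym; case/andP: (farJ x xJ).
- by case/andP: (farJ y yJ).
- exact: eirr.
Qed.

Hypothesis htf : triangle_free e.

Lemma independent_setU_uncovered v J S : indep_outside v J -> S \subset nbhd v ->
  independent e (J :|: S) = (S \subset uncovered v J).
Proof.
have [esym _] := hG.
case/andP=> _ /independentP indJ /subsetP sS.
apply/independentP/subsetP => [indJS u uS | sU x y].
  rewrite inE sS //=; apply/forall_inP => j jJ.
  by apply: indJS; rewrite inE ?uS ?jJ ?orbT.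
have uncov z : z \in S -> e v z && [forall j in J, ~~ e z j].
  by move/sU; rewrite !inE.
rewrite !inE => /orP[xJ | xS] /orP[yJ | yS].
- exact: indJ.
- by case/andP: (uncov y yS) => _ /forall_inP /(_ x xJ); rewrite esym.
- by case/andP: (uncov x xS) => _ /forall_inP /(_ y yJ).
- case/andP: (uncov x xS) => evx _; case/andP: (uncov y yS) => evy _.
  by apply/negP => exy; move: (htf evx exy); rewrite evy.
Qed.

Lemma subset_nbhd v S : (S \subset nbhd v) = (S \subset cnbhd v) && (v \notin S).
Proof.
have [_ eirr] := hG.
apply/idP/andP => [sN | [sC vS]].
  split; first exact: subset_trans sN (subsetUr _ _).
  by apply: contraNN (eirr v) => /(subsetP sN); rewrite inE.
apply/subsetP => z zS; move/subsetP: sC => /(_ z zS); rewrite !inE.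
by case: eqP => [zv | //]; rewrite -zv zS in vS.
Qed.

Lemma outside_setU1 v J : J \subset ~: cnbhd v ->
  [/\ #|J :|: [set v]| = #|J|.+1, (J :|: [set v]) :&: nbhd v = set0
    & v \in J :|: [set v]].
Proof.
have [_ eirr] := hG.
move=> sJ; have [-> -> ->] := outside_setU sJ (sub1set_cnbhd v).
rewrite cards1 addn1 set11; split => //; apply/setP => z; rewrite !inE.
by case: eqP => // ->; rewrite (negbTE (eirr v)).
Qed.

Lemma outside_setU_nbhd v J S : J \subset ~: cnbhd v -> S \subset nbhd v ->
  [/\ #|J :|: S| = (#|J| + #|S|)%N, (J :|: S) :&: nbhd v = S & v \notin J :|: S].
Proof.
move=> sJ sN; have /andP[sC vS] : (S \subset cnbhd v) && (v \notin S) by rewrite -subset_nbhd.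
by have [-> -> ->] := outside_setU sJ sC; rewrite (setIidPl sN).
Qed.

Lemma sum_independent_local (R : nmodType) v (F : {set V} -> R) :
  \sum_(I | independent e I) F I =
  \sum_(J | indep_outside v J)
     (F (J :|: [set v]) + \sum_(S : {set V} | S \subset uncovered v J) F (J :|: S)).
Proof.
rewrite (partition_big (fun I => I :\: cnbhd v) (indep_outside v)); last first.
  move=> I /independentP indI; apply/andP; split.
    by apply/subsetP => z; rewrite !inE => /andP[].
  by apply/independentP => x y; rewrite !inE => /andP[_ xI] /andP[_ yI]; apply: indI.
apply: eq_bigr => J outJ.
rewrite (reindex_onto (fun S : {set V} => J :|: S) (fun I => I :&: cnbhd v)) /=; last first.
  by move=> I /andP[_ /eqP <-]; rewrite setUC setID.
have dJ : [disjoint J & cnbhd v] by rewrite disjoints_subset; case/andP: outJ.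
have pieces (S : {set V}) :
    independent e (J :|: S) && ((J :|: S) :\: cnbhd v == J) && ((J :|: S) :&: cnbhd v == S)
    = (S \subset cnbhd v) && independent e (J :|: S).
  apply/idP/andP => [/andP[/andP[indJS _] /eqP eqS] | [sS indJS]].
    by split => //; rewrite -eqS subsetIr.
  have SC : S :\: cnbhd v = set0 by apply/eqP; rewrite setD_eq0.
  rewrite indJS setDUl setIUl SC (setDidPl dJ) (setIidPl sS) (disjoint_setI0 dJ).
  by rewrite setU0 set0U !eqxx.
rewrite (eq_bigl _ _ pieces).
rewrite (bigID (fun S => v \in S)) /=; congr (_ + _).
  apply: big_pred1 => S /=; apply/idP/eqP => [/andP[/andP[sS indJS] vS] | ->].
    exact: independent_setU_center indJS.
  by rewrite sub1set setU11 set11 andbT independent_setU1_center.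
apply: eq_bigl => S; rewrite andbAC -subset_nbhd.
have [sN | nsN] := boolP (S \subset nbhd v); first by rewrite (independent_setU_uncovered outJ sN).
by apply/esym/negbTE; apply: contra nsN => /subset_trans; apply; apply: uncovered_sub.
Qed.

End Neighbourhoods.

Section IndependencePolynomial.
Variables (R : comNzRingType) (V : finType) (e : rel V).

Lemma horner_indep_poly (x : R) :
  (indep_poly R e).[x] = \sum_(A : {set V} | independent e A) x ^+ #|A|.
Proof. by rewrite horner_sum; apply: eq_bigr => A _; rewrite hornerXn. Qed.

Lemma horner_indep_poly_deriv (x : R) :
  x * (indep_poly R e)^`().[x] = \sum_(A : {set V} | independent e A) #|A|%:R * x ^+ #|A|.
Proof.
rewrite raddf_sum /= horner_sum mulr_sumr; apply: eq_bigr => A _.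
rewrite derivXn hornerMn hornerXn mulrnAr.
by case: #|A| => [|k]; rewrite ?mul0r // -exprS mulr_natl.
Qed.

End IndependencePolynomial.

Section LocalSums.
Variables (R : comNzRingType) (V : finType) (e : rel V) (lam : R).
Hypotheses (hG : simple_graph e) (htf : triangle_free e).

Lemma local_partition v :
  \sum_(I : {set V} | independent e I) lam ^+ #|I| =
  \sum_(J | indep_outside e v J) lam ^+ #|J| * (lam + (1 + lam) ^+ #|uncovered e v J|).
Proof.
rewrite (sum_independent_local hG htf v); apply: eq_bigr => J /andP[sJ _].
have [-> _ _] := outside_setU1 hG sJ.
rewrite exprSr mulrDr; congr (_ + _).
rewrite -sum_subset_expr mulr_sumr; apply: eq_bigr => S sU.
have [-> _ _] := outside_setU_nbhd hG sJ (subset_trans sU (uncovered_sub e v J)).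
by rewrite exprD.
Qed.

Lemma local_occupancy v :
  \sum_(I : {set V} | independent e I) (v \in I)%:R * lam ^+ #|I| =
  \sum_(J | indep_outside e v J) lam ^+ #|J| * lam.
Proof.
rewrite (sum_independent_local hG htf v); apply: eq_bigr => J /andP[sJ _].
have [-> _ ->] := outside_setU1 hG sJ.
rewrite mul1r exprSr big1 ?addr0 // => S sU.
have [_ _ vJS] := outside_setU_nbhd hG sJ (subset_trans sU (uncovered_sub e v J)).
by rewrite (negbTE vJS) mul0r.
Qed.

Lemma local_nbhd_occupancy v :
  \sum_(I : {set V} | independent e I) #|I :&: nbhd e v|%:R * lam ^+ #|I| =
  \sum_(J | indep_outside e v J) lam ^+ #|J| *
     (#|uncovered e v J|%:R * lam * (1 + lam) ^+ #|uncovered e v J|.-1).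
Proof.
rewrite (sum_independent_local hG htf v); apply: eq_bigr => J /andP[sJ _].
have [_ -> _] := outside_setU1 hG sJ.
rewrite cards0 mul0r add0r -sum_subset_card_expr mulr_sumr; apply: eq_bigr => S sU.
have [-> -> _] := outside_setU_nbhd hG sJ (subset_trans sU (uncovered_sub e v J)).
by rewrite exprD mulrCA.
Qed.

End LocalSums.

Lemma card_eq_sum_mem (T : finType) (A : {set T}) : #|A| = (\sum_(x : T) (x \in A))%N.
Proof. by rewrite -sum1_card big_mkcond; apply: eq_bigr => x _; case: (x \in A). Qed.

Lemma sum_card_setI_nbhd (V : finType) (e : rel V) (d : nat) (A : {set V}) :
  simple_graph e -> regular e d -> (\sum_(v : V) #|A :&: nbhd e v|)%N = (d * #|A|)%N.
Proof.
move=> [esym _] hreg.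
transitivity (\sum_(v : V) \sum_(u in A) (e v u : nat))%N.
  apply: eq_bigr => v _; rewrite card_eq_sum_mem [RHS]big_mkcond.
  by apply: eq_bigr => u _; rewrite !inE; case: (u \in A).
rewrite exchange_big /= mulnC -sum_nat_const; apply: eq_bigr => u _.
by rewrite -(hreg u) card_eq_sum_mem; apply: eq_bigr => v _; rewrite inE esym.
Qed.

Section LocalAverages.
Variables (R : comNzRingType) (V : finType) (e : rel V) (lam : R).
Hypotheses (hG : simple_graph e) (htf : triangle_free e).

Definition local_sum (f : nat -> R) : R :=
  \sum_(v : V) \sum_(J | indep_outside e v J) lam ^+ #|J| * f #|uncovered e v J|.

Lemma local_sum_partition :
  #|V|%:R * (indep_poly R e).[lam] = local_sum (fun y => lam + (1 + lam) ^+ y).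
Proof.
rewrite /local_sum; under eq_bigr do rewrite -local_partition //.
by rewrite sumr_const mulr_natl horner_indep_poly.
Qed.

Lemma local_sum_occupancy : lam * (indep_poly R e)^`().[lam] = local_sum (fun=> lam).
Proof.
rewrite /local_sum; under eq_bigr do rewrite -local_occupancy //.
rewrite exchange_big horner_indep_poly_deriv; apply: eq_bigr => I _.
by rewrite -mulr_suml -natr_sum -card_eq_sum_mem.
Qed.

Lemma local_sum_nbhd_occupancy d : regular e d ->
  d%:R * (lam * (indep_poly R e)^`().[lam])
  = local_sum (fun y => y%:R * lam * (1 + lam) ^+ y.-1).
Proof.
move=> hreg; rewrite /local_sum; under eq_bigr do rewrite -local_nbhd_occupancy //.
rewrite exchange_big horner_indep_poly_deriv mulr_sumr; apply: eq_bigr => I _.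
by rewrite -mulr_suml -natr_sum (sum_card_setI_nbhd _ hG hreg) natrM mulrA.
Qed.

End LocalAverages.

Section SlackSum.
Variables (R : realDomainType) (V : finType) (e : rel V) (d : nat) (lam : R).
Hypotheses (hG : simple_graph e) (htf : triangle_free e) (hreg : regular e d)
  (lam_gt0 : 0 < lam).

Lemma card_uncovered_le v (J : {set V}) : (#|uncovered e v J| <= d)%N.
Proof. by rewrite -(hreg v); apply/subset_leq_card/uncovered_sub. Qed.

Lemma local_sum_slack :
  local_sum e lam (slack lam d) =
  d%:R * (lam * (1 + lam) ^+ d.-1 * (#|V|%:R * (indep_poly R e).[lam])
          - lam * (indep_poly R e)^`().[lam] * (2 * (1 + lam) ^+ d - 1)).
Proof.
have -> : local_sum e lam (slack lam d) =
    d%:R * lam * (1 + lam) ^+ d.-1 * local_sum e lam (fun y => lam + (1 + lam) ^+ y)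
    - d%:R * (1 + lam) ^+ d * local_sum e lam (fun=> lam)
    - ((1 + lam) ^+ d - 1) * local_sum e lam (fun y => y%:R * lam * (1 + lam) ^+ y.-1).
  rewrite /local_sum !mulr_sumr -!sumrB; apply: eq_bigr => v _.
  by rewrite !mulr_sumr -!sumrB; apply: eq_bigr => J _; rewrite /slack; ring.
rewrite -local_sum_partition // -local_sum_occupancy // -(local_sum_nbhd_occupancy _ hG htf hreg).
ring.
Qed.

Lemma slack_term_ge0 v (J : {set V}) : 0 <= lam ^+ #|J| * slack lam d #|uncovered e v J|.
Proof. by rewrite mulr_ge0 ?exprn_ge0 ?slack_ge0 ?card_uncovered_le ?ltW. Qed.

Lemma local_sum_slack_ge0 : 0 <= local_sum e lam (slack lam d).
Proof. by do 2!apply: sumr_ge0 => ? _; apply: slack_term_ge0. Qed.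

Lemma local_sum_slack_eq0 : local_sum e lam (slack lam d) = 0 ->
  forall v J, indep_outside e v J ->
  (#|uncovered e v J| == 0%N) || (#|uncovered e v J| == d).
Proof.
rewrite /local_sum => sum0 v J outJ.
have inner0 := psumr_eq0P (fun v _ => sumr_ge0 _ (fun J _ => slack_term_ge0 v J)) sum0 (i := v) isT.
move/eqP: (psumr_eq0P (fun J _ => slack_term_ge0 v J) inner0 outJ).
rewrite mulf_eq0 expf_eq0 (gt_eqF lam_gt0) andbF /=; apply: contraLR.
rewrite negb_or => /andP[U0 Ud].
by rewrite gt_eqF // slack_gt0 // lt0n U0 ltn_neqAle Ud card_uncovered_le.
Qed.

End SlackSum.

Lemma nbhd_eq_of_extreme (V : finType) (e : rel V) (d : nat) :
  simple_graph e -> triangle_free e -> regular e d ->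
  (forall v J, indep_outside e v J ->
     (#|uncovered e v J| == 0%N) || (#|uncovered e v J| == d)) ->
  forall v u x, e v u -> e u x -> nbhd e v = nbhd e x.
Proof.
move=> [esym eirr] htf hreg extreme v u x evu eux.
have [-> // | xv] := eqVneq x v.
have outx : indep_outside e v [set x].
  rewrite /indep_outside sub1set !inE negb_or xv (htf _ _ _ evu eux) /=.
  by apply/independentP => a b; rewrite !inE => /eqP-> /eqP->.
have Ux : uncovered e v [set x] = [set w in nbhd e v | ~~ e w x].
  apply/setP => w; rewrite !inE; congr (_ && _).
  by apply/forall_inP/idP => [-> | ? j /set1P->]; rewrite ?inE.
have U_proper : uncovered e v [set x] \proper nbhd e v.
  rewrite Ux; apply/properP; split; first by apply/subsetP => w; rewrite inE => /andP[].
  by exists u; rewrite !inE ?evu // eux.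
have /orP[/eqP U0 | /eqP Ud] := extreme v _ outx; last first.
  by move: (proper_card U_proper); rewrite Ud hreg ltnn.
apply/eqP; rewrite eqEcard hreg -(hreg v) leqnn andbT.
apply/subsetP => w; rewrite !inE => evw; apply/negPn/negP => exw.
have : w \in uncovered e v [set x] by rewrite Ux !inE evw esym exw.
by rewrite (cards0_eq U0) inE.
Qed.

Section TwinClasses.
Variables (V : finType) (e : rel V) (d : nat).
Hypotheses (hG : simple_graph e) (hreg : regular e d) (d_gt0 : (0 < d)%N)
  (nbhd_eq_dist2 : forall v u x, e v u -> e u x -> nbhd e v = nbhd e x).

Definition twin_class (x : V) : {set V} := [set y | nbhd e y == nbhd e x].
Definition block (x : V) : {set V} := twin_class x :|: nbhd e x.
Definition block_rep (x : V) : V := odflt x [pick y in block x].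
Definition block_side (r : V) (b : bool) : {set V} := if b then twin_class r else nbhd e r.

Lemma twin_class_nbhd x u : e x u -> twin_class x = nbhd e u.
Proof.
have [esym _] := hG.
move=> exu; apply/setP => y; rewrite !inE; apply/eqP/idP => [eq_xy | euy].
  have : u \in nbhd e y by rewrite eq_xy inE.
  by rewrite inE esym.
by rewrite (nbhd_eq_dist2 exu euy).
Qed.

Lemma mem_twin_class x : x \in twin_class x.
Proof. by rewrite inE. Qed.

Lemma twin_class_eq x y : y \in twin_class x -> twin_class y = twin_class x.
Proof. by rewrite inE => /eqP eq_yx; apply/setP => z; rewrite !inE eq_yx. Qed.

Lemma nbhd_notin_twin_class x y : y \in nbhd e x -> y \notin twin_class x.
Proof.
have [esym eirr] := hG.
rewrite !inE => exy; apply/negP => /eqP eq_yx.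
have : x \in nbhd e y by rewrite inE esym.
by rewrite eq_yx inE (negbTE (eirr x)).
Qed.

Lemma mem_block_nbhd r y : y \in block r -> (y \in nbhd e r) = (y \notin twin_class r).
Proof.
move=> yr; apply/idP/idP => [/nbhd_notin_twin_class // | yns].
by move: yr; rewrite inE (negbTE yns).
Qed.

Lemma mem_block x : x \in block x.
Proof. by rewrite inE mem_twin_class. Qed.

Lemma block_eq x y : y \in block x -> block y = block x.
Proof.
rewrite inE => /orP[ys | yn].
  by rewrite /block (twin_class_eq ys); move: ys; rewrite inE => /eqP->.
have exy : e x y by move: yn; rewrite inE.
have eyx : e y x by rewrite (proj1 hG).
by rewrite /block -(twin_class_nbhd exy) (twin_class_nbhd eyx) setUC.
Qed.

Lemma block_rep_mem x : block_rep x \in block x.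
Proof. by rewrite /block_rep; case: pickP => [// | /(_ x)]; rewrite mem_block. Qed.

Lemma block_rep_eq x y : block y = block x -> block_rep y = block_rep x.
Proof. by rewrite /block_rep => ->; case: pickP => [// | /(_ x)]; rewrite mem_block. Qed.

Lemma block_rep_idem x : block_rep (block_rep x) = block_rep x.
Proof. exact/block_rep_eq/block_eq/block_rep_mem. Qed.

Lemma edge_block r x y : x \in block r -> y \in block r ->
  e x y = ((x \in twin_class r) != (y \in twin_class r)).
Proof.
move=> xr yr; have -> : e x y = (y \in nbhd e x) by rewrite inE.
have [xs | xs] := boolP (x \in twin_class r).
  by move: xs; rewrite inE => /eqP->; rewrite mem_block_nbhd.
have exr : e r x by move: xs; rewrite -mem_block_nbhd // inE.
by rewrite -(twin_class_nbhd exr); case: (y \in twin_class r).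
Qed.

Lemma edge_block_rep x y :
  e x y = (block_rep x == block_rep y)
          && ((x \in twin_class (block_rep x)) != (y \in twin_class (block_rep y))).
Proof.
have xr : x \in block (block_rep x) by rewrite (block_eq (block_rep_mem x)) mem_block.
have [eq_rep | neq_rep] := eqVneq (block_rep x) (block_rep y).
  have yr : y \in block (block_rep x) by rewrite eq_rep (block_eq (block_rep_mem y)) mem_block.
  by rewrite -eq_rep (edge_block xr yr).
apply/negbTE; apply: contra_neqN neq_rep => exy.
by apply/esym/block_rep_eq/block_eq; rewrite !inE exy orbT.
Qed.

Lemma card_block_side r b : #|block_side r b| = d.
Proof.
have [u eru] : exists u, e r u.
  have /card_gt0P[u uN] : (0 < #|nbhd e r|)%N by rewrite hreg.
  by exists u; rewrite inE in uN.
by case: b; rewrite /block_side ?(twin_class_nbhd eru) hreg.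
Qed.

Lemma block_side_sub r b : block_side r b \subset block r.
Proof. by case: b; [apply: subsetUl | apply: subsetUr]. Qed.

Lemma twin_class_block_side r b y : y \in block_side r b -> twin_class y = block_side r b.
Proof.
case: b => [/twin_class_eq // | ery]; rewrite inE in ery.
by apply: twin_class_nbhd; rewrite (proj1 hG).
Qed.

Lemma mem_twin_class_block_side r b y : y \in block_side r b -> (y \in twin_class r) = b.
Proof. by rewrite /block_side; case: b => [-> | /nbhd_notin_twin_class/negbTE]. Qed.

Lemma mem_block_side_rep x : x \in block_side (block_rep x) (x \in twin_class (block_rep x)).
Proof.
have xr : x \in block (block_rep x) by rewrite (block_eq (block_rep_mem x)) mem_block.
rewrite /block_side; case: ifP => // /negbT.
by rewrite -(mem_block_nbhd xr).
Qed.

Lemma index_twin_class_lt x : (index x (enum (twin_class x)) < d)%N.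
Proof.
by rewrite -(card_block_side x true) cardE index_mem mem_enum mem_twin_class.
Qed.

(* A vertex is coded by the representative of its block, the side of the block
   it lies on, and its position in its twin class. *)
Lemma disjoint_union_Kdd_of_twins : disjoint_union_Kdd e d.
Proof.
pose I := {r : V | block_rep r == r}.
pose f (x : V) : I * (bool * 'I_d) :=
  (exist _ (block_rep x) (introT eqP (block_rep_idem x)),
   (x \in twin_class (block_rep x), Ordinal (index_twin_class_lt x))).
pose g (p : I * (bool * 'I_d)) : V :=
  nth (val p.1) (enum (block_side (val p.1) p.2.1)) p.2.2.
exists I, f; split; last by move=> x y; rewrite edge_block_rep.
exists g => [x | [[r rr] [b k]]].
  rewrite /g /= (twin_class_block_side (mem_block_side_rep x)).
  by rewrite nth_index // mem_enum mem_block_side_rep.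
rewrite /g /=; set y := nth r _ _.
have yh : y \in block_side r b by rewrite -mem_enum mem_nth // -cardE card_block_side.
have ry : block_rep y = r.
  by rewrite -[RHS](eqP rr); apply/block_rep_eq/block_eq/(subsetP (block_side_sub r b)).
rewrite /f; congr (_, (_, _)); first exact: val_inj.
  by rewrite ry (mem_twin_class_block_side yh).
apply: val_inj; rewrite /= (twin_class_block_side yh) index_uniq ?enum_uniq //.
by rewrite -cardE card_block_side.
Qed.

End TwinClasses.

Section CompleteBipartite.
Variable d : nat.
Implicit Type A : {set bool * 'I_d}.

Definition Kside (b : bool) : {set bool * 'I_d} := [set u | u.1 == b].

Lemma card_Kside b : #|Kside b| = d.
Proof.
have -> : Kside b = setX [set b] setT by apply/setP => -[c i]; rewrite !inE andbT.
by rewrite cardsX cards1 cardsT card_ord mul1n.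
Qed.

Lemma independent_Kdd A :
  independent (@Kdd_rel d) A = (A \subset Kside true) || (A \subset Kside false).
Proof.
apply/independentP/idP => [indA | sA x y xA yA].
  have [-> | [a aA]] := set_0Vmem A; first by rewrite sub0set.
  have sA : A \subset Kside a.1.
    apply/subsetP => y yA; rewrite inE eq_sym.
    by move: (indA a y aA yA); rewrite /Kdd_rel negbK.
  by case: (a.1) sA => ->; rewrite ?orbT.
rewrite /Kdd_rel negbK.
by case/orP: sA => /subsetP sA; move: (sA x xA) (sA y yA); rewrite !inE => /eqP-> /eqP->.
Qed.

Lemma sum_independent_Kdd (R : zmodType) (F : {set bool * 'I_d} -> R) :
  \sum_(A | independent (@Kdd_rel d) A) F A =
  \sum_(A : {set _} | A \subset Kside true) F A
  + \sum_(A : {set _} | A \subset Kside false) F A - F set0.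
Proof.
have both (A : {set _}) : (A \subset Kside false) && (A \subset Kside true) = (A == set0).
  have disj : Kside false :&: Kside true = set0.
    by apply/setP => u; rewrite !inE; case: (u.1).
  by rewrite -subsetI disj subset0.
rewrite (eq_bigl _ _ independent_Kdd) (bigID (fun A : {set _} => A \subset Kside true)) /=.
rewrite [X in _ = _ + X - _](bigID (fun A : {set _} => A \subset Kside true)) /=.
rewrite (eq_bigl _ _ both) big_pred1_eq [F set0 + _]addrC addrA addrK; congr (_ + _).
  by apply: eq_bigl => A; case: (A \subset Kside true); rewrite ?andbF.
by apply: eq_bigl => A; case: (A \subset Kside true); rewrite ?andbF ?orbF.
Qed.

End CompleteBipartite.

Lemma horner_indep_poly_gt0 (R : realDomainType) (V : finType) (e : rel V) (x : R) :
  0 <= x -> 0 < (indep_poly R e).[x].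
Proof.
move=> x_ge0; rewrite horner_indep_poly (bigD1 set0) /=; last first.
  by apply/independentP => ? ?; rewrite inE.
by rewrite cards0 expr0 ltr_wpDr // sumr_ge0 // => A _; rewrite exprn_ge0.
Qed.

Lemma horner_indep_poly_Kdd (R : comNzRingType) (d : nat) (x : R) :
  (indep_poly R (@Kdd_rel d)).[x] = 2 * (1 + x) ^+ d - 1.
Proof.
rewrite horner_indep_poly sum_independent_Kdd !sum_subset_expr !card_Kside.
by rewrite cards0 mulr_natl mulr2n.
Qed.

Lemma horner_indep_poly_deriv_Kdd (R : comNzRingType) (d : nat) (x : R) :
  x * (indep_poly R (@Kdd_rel d))^`().[x] = 2 * (d%:R * x * (1 + x) ^+ d.-1).
Proof.
rewrite horner_indep_poly_deriv sum_independent_Kdd !sum_subset_card_expr !card_Kside.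
by rewrite cards0 mul0r subr0; ring.
Qed.

Lemma Kdd_partition_gt0 (R : realDomainType) (d : nat) (x : R) :
  0 <= x -> 0 < 2 * (1 + x) ^+ d - 1.
Proof. by move=> x_ge0; rewrite -horner_indep_poly_Kdd horner_indep_poly_gt0. Qed.

Lemma alpha_bar_Kdd (R : realFieldType) (d : nat) (lam : R) : (0 < d)%N -> 0 < lam ->
  ((2 * d)%:R)^-1 * alpha_bar (@Kdd_rel d) lam
  = lam * (1 + lam) ^+ d.-1 / (2 * (1 + lam) ^+ d - 1).
Proof.
move=> d_gt0 lam_gt0.
have K_gt0 := Kdd_partition_gt0 d (ltW lam_gt0).
rewrite /alpha_bar horner_indep_poly_deriv_Kdd horner_indep_poly_Kdd natrM.
by field; rewrite gt_eqF // pnatr_eq0 -lt0n d_gt0.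
Qed.

Lemma le_ratio_of_cross (R : realFieldType) (n : nat) (T P c K : R) :
  0 < P -> 0 < K -> 0 < c -> 0 <= c * (n%:R * P) - T * K ->
  n%:R^-1 * (T / P) <= c / K /\
  (n%:R^-1 * (T / P) = c / K -> c * (n%:R * P) - T * K = 0).
Proof.
move=> P_gt0 K_gt0 c_gt0 gap_ge0; have cK_gt0 : 0 < c / K by rewrite divr_gt0.
have [-> | n_gt0] := posnP n.
  by rewrite invr0 mul0r; split => [|cK0]; [rewrite ltW | rewrite cK0 ltxx in cK_gt0].
have nPK_gt0 : 0 < n%:R * P * K by rewrite !mulr_gt0 ?ltr0n.
have gapE : c / K - n%:R^-1 * (T / P) = (c * (n%:R * P) - T * K) / (n%:R * P * K).
  by field; rewrite !gt_eqF ?ltr0n.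
split; first by rewrite -subr_ge0 gapE divr_ge0 // ltW.
move=> eq_ratio; move: gapE; rewrite eq_ratio subrr => /esym/eqP.
by rewrite mulf_eq0 invr_eq0 (gt_eqF nPK_gt0) orbF => /eqP.
Qed.

Theorem theorem2p2 (R : realFieldType) (V : finType) (e : rel V) (d : nat)
  (hd : (1 <= d)%N) (hG : simple_graph e) (hreg : regular e d)
  (htf : triangle_free e) (lam : R) (hlam : 0 < lam) :
  [/\ (#|V|%:R)^-1 * alpha_bar e lam <= ((2 * d)%:R)^-1 * alpha_bar (@Kdd_rel d) lam,
      ((2 * d)%:R)^-1 * alpha_bar (@Kdd_rel d) lam
        = lam * (1 + lam) ^+ d.-1 / (2 * (1 + lam) ^+ d - 1)
    & (#|V|%:R)^-1 * alpha_bar e lam = ((2 * d)%:R)^-1 * alpha_bar (@Kdd_rel d) lam ->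
      disjoint_union_Kdd e d].
Proof.
have P_gt0 := horner_indep_poly_gt0 e (ltW hlam).
have K_gt0 := Kdd_partition_gt0 d (ltW hlam).
have c_gt0 : 0 < lam * (1 + lam) ^+ d.-1 by rewrite mulr_gt0 ?exprn_gt0 ?addr_gt0.
have gap_ge0 := local_sum_slack_ge0 hreg hlam.
rewrite (local_sum_slack lam hG htf hreg) pmulr_rge0 ?ltr0n // in gap_ge0.
have [le_mean eq_mean] := le_ratio_of_cross P_gt0 K_gt0 c_gt0 gap_ge0.
rewrite alpha_bar_Kdd // /alpha_bar; split => // /eq_mean gap0.
apply: (disjoint_union_Kdd_of_twins hG hreg hd).
apply: (nbhd_eq_of_extreme hG htf hreg).
apply: (local_sum_slack_eq0 hreg hlam).
by rewrite (local_sum_slack lam hG htf hreg) gap0 mulr0.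
Qed.
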